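(* Assume (A1), (A2), (A4) for problem (DC), and assume (instead of (A3)) only that each $\nabla f_i$ is Lipschitz continuous on $\mathcal X$ with constant $L_{\nabla f_i}$. Let $\boldsymbol\tau>\mathbf 0$ with $\tau^{\min}:=\min_i\tau_i>2\sum_{i=1}^IL_{\nabla f_i}$, and let $\gamma^\nu=1$ for all $\nu$. Let $\{\mathbf x^\nu\}$ be generated by Algorithm 1 (so $\mathbf x^{\nu+1}=\hat{\mathbf x}(\mathbf x^\nu)$) from some $\mathbf x^0\in\Xi$. Then either $\mathbf x^\nu$ is a stationary point of (DC) for some finite $\nu$, or $\{\mathbf x^\nu\}$ has at least one limit point and every limit point is a stationary point of (DC).
   Context: Let $I\ge1$, $n_1,\dots,n_I\ge1$, $n=\sum_i n_i$. Vectors $\mathbf x\in\mathbb R^n$ are partitioned as $\mathbf x=(\mathbf x_i)_{i=1}^I$, $\mathbf x_i\in\mathbb R^{n_i}$; $\mathbf x_{-i}=(\mathbf x_j)_{j\ne i}$, and $(\mathbf x_i,\mathbf y_{-i})$ is the vector with $i$-th block $\mathbf x_i$ and $j$-th block $\mathbf y_j$ for $j\neq i$. Given sets $\mathcal X_i\subseteq\mathbb R^{n_i}$, functions $f_i,g_i:\mathbb R^n\to\mathbb R$ and $\mathbf h=(h_1,\dots,h_{n_c}):\mathbb R^n\to\mathbb R^{n_c}$, problem (DC) is: minimize $\theta(\mathbf x)=\sum_{i=1}^I(f_i(\mathbf x)-g_i(\mathbf x))$ subject to $\mathbf x_i\in\mathcal X_i$ for all $i$ and $\mathbf h(\mathbf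 x)\le\mathbf 0$. Let $\mathcal X=\prod_i\mathcal X_i$, $\mathcal X_{-i}=\prod_{j\ne i}\mathcal X_j$, $\Xi=\{\mathbf x\in\mathcal X:\mathbf h(\mathbf x)\le\mathbf 0\}$. Assumptions: (A1) each $f_i,g_i,h_j$ is convex and continuously differentiable on an open set containing $\mathcal X$; (A2) each $\mathcal X_i$ is nonempty, closed, convex; (A4) for some $\mathbf x^0\in\Xi$ the set $\{\mathbf x\in\Xi:\theta(\mathbf x)\le\theta(\mathbf x^0)\}$ is compact. A stationary point of (DC) is $\mathbf x^\star\in\Xi$ with $\nabla\theta(\mathbf x^\star)^T(\mathbf y-\mathbf x^\star)\ge0$ for all $\mathbf y\in\Xi$. For $\mathbf y\in\mathcal X$ and $\boldsymbol\tau=(\tau_i)>\mathbf 0$ let $\tilde\theta(\mathbf x;\mathbf y)=\sum_i\tilde\theta_i(\mathbf x_i;\mathbf y)$ with $\tilde\theta_i(\mathbf x_i;\mathbf y)=f_i(\mathbf x_i,\mathbf y_{-i})+\sum_{j\ne i}\nabla_{\mathbf x_i}f_j(\mathbf y)^T(\mathbf x_i-\mathbf y_i)-g_i(\mathbf y)-\sum_{j=1}^I\nabla_{\mathbf x_i}g_j(\mathbf y)^T(\mathbf x_i-\mathbf y_i)+\tfrac{\tau_i}{2}\|\mathbf x_i-\mathbf y_i\|^2,$ and $\hat{\mathbf x}(\mathbf y):=\arg\min_{\mathbf x\in\Xi}\tilde\theta(\mathbf x;\mathbf y)$ (unique, since $\tilde\theta(\cdot;\mathbf y)$ is strongly convex).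 Algorithm 1: given $\boldsymbol\tau$, $\{\gamma^\nu\}\subset(0,1]$ and $\mathbf x^0\in\Xi$, set $\mathbf x^{\nu+1}=\mathbf x^\nu+\gamma^\nu(\hat{\mathbf x}(\mathbf x^\nu)-\mathbf x^\nu)$. *)

From Stdlib Require Import Reals Lra.
Open Scope R_scope.

(* Vectors of R^n, n = sum_{i<I} ns i, are represented block-wise as
   x : nat -> nat -> R, where x i k is coordinate k of block i.
   Only the coordinates with i < I and k < ns i are meaningful; a vector of
   R^n is such a function which is zero elsewhere ([wf]).
   A block vector of R^{n_i} is u : nat -> R, zero for k >= ns i ([bwf]). *)
Definition Vec := nat -> nat -> R.
Definition BVec := nat -> R.

Fixpoint sumR (n : nat) (F : nat -> R) : R :=
  match n with O => 0 | S m => sumR m F + F m end.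

Definition vadd (x y : Vec) : Vec := fun i k => x i k + y i k.
Definition vsub (x y : Vec) : Vec := fun i k => x i k - y i k.
Definition vscal (t : R) (x : Vec) : Vec := fun i k => t * x i k.
Definition bsub (u v : BVec) : BVec := fun k => u k - v k.
Definition badd (u v : BVec) : BVec := fun k => u k + v k.
Definition bscal (t : R) (u : BVec) : BVec := fun k => t * u k.

Definition binner (ns : nat -> nat) (i : nat) (u v : BVec) : R :=
  sumR (ns i) (fun k => u k * v k).
Definition bnorm (ns : nat -> nat) (i : nat) (u : BVec) : R :=
  sqrt (binner ns i u u).
Definition inner (I : nat) (ns : nat -> nat) (x y : Vec) : R :=
  sumR I (fun i => binner ns i (x i) (y i)).
Definition vnorm (I : nat) (ns : nat -> nat) (x : Vec) : R :=
  sqrt (inner I ns x x).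

Definition wf (I : nat) (ns : nat -> nat) (x : Vec) : Prop :=
  forall i k, ~ ((i < I)%nat /\ (k < ns i)%nat) -> x i k = 0.
Definition bwf (ns : nat -> nat) (i : nat) (u : BVec) : Prop :=
  forall k, (ns i <= k)%nat -> u k = 0.

Definition repl (xi : BVec) (y : Vec) (i : nat) : Vec :=
  fun j k => if Nat.eqb j i then xi k else y j k.

Definition vopen_set (I : nat) (ns : nat -> nat) (U : Vec -> Prop) : Prop :=
  forall x, U x -> wf I ns x /\
    exists r, 0 < r /\ forall y, wf I ns y -> vnorm I ns (vsub y x) < r -> U y.

Definition vconvex_set (I : nat) (ns : nat -> nat) (U : Vec -> Prop) : Prop :=
  forall x y t, U x -> U y -> 0 <= t <= 1 ->
    U (vadd (vscal t x) (vscal (1 - t) y)).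

Definition convex_fun_on (U : Vec -> Prop) (f : Vec -> R) : Prop :=
  forall x y t, U x -> U y -> 0 <= t <= 1 ->
    f (vadd (vscal t x) (vscal (1 - t) y)) <= t * f x + (1 - t) * f y.

Definition has_grad_on (I : nat) (ns : nat -> nat) (U : Vec -> Prop)
  (f : Vec -> R) (gf : Vec -> Vec) : Prop :=
  forall x, U x -> wf I ns (gf x) /\
    forall eps, 0 < eps -> exists delta, 0 < delta /\
      forall y, wf I ns y -> vnorm I ns (vsub y x) < delta ->
        Rabs (f y - f x - inner I ns (gf x) (vsub y x)) <= eps * vnorm I ns (vsub y x).

Definition cont_on (I : nat) (ns : nat -> nat) (U : Vec -> Prop) (G : Vec -> Vec) : Prop :=
  forall x, U x -> forall eps, 0 < eps -> exists delta, 0 < delta /\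
    forall y, U y -> vnorm I ns (vsub y x) < delta ->
      vnorm I ns (vsub (G y) (G x)) < eps.

Definition convex_C1_on (I : nat) (ns : nat -> nat) (U : Vec -> Prop)
  (f : Vec -> R) (gf : Vec -> Vec) : Prop :=
  convex_fun_on U f /\ has_grad_on I ns U f gf /\ cont_on I ns U gf.

Definition bsubset (ns : nat -> nat) (i : nat) (S : BVec -> Prop) : Prop :=
  forall u, S u -> bwf ns i u.
Definition bnonempty (S : BVec -> Prop) : Prop := exists u, S u.
Definition bclosed (ns : nat -> nat) (i : nat) (S : BVec -> Prop) : Prop :=
  forall (u : nat -> BVec) (v : BVec), (forall m, S (u m)) -> bwf ns i v ->
    (forall eps, 0 < eps -> exists N, forall m, (N <= m)%nat ->
        bnorm ns i (bsub (u m) v) < eps) -> S v.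
Definition bconvex (S : BVec -> Prop) : Prop :=
  forall u v t, S u -> S v -> 0 <= t <= 1 -> S (badd (bscal t u) (bscal (1 - t) v)).

Definition inX (I : nat) (ns : nat -> nat) (X : nat -> BVec -> Prop) (x : Vec) : Prop :=
  wf I ns x /\ forall i, (i < I)%nat -> X i (x i).
Definition inXi (I : nat) (ns : nat -> nat) (X : nat -> BVec -> Prop)
  (nc : nat) (h : nat -> Vec -> R) (x : Vec) : Prop :=
  inX I ns X x /\ forall j, (j < nc)%nat -> h j x <= 0.

Definition theta (I : nat) (f g : nat -> Vec -> R) (x : Vec) : R :=
  sumR I (fun i => f i x - g i x).
Definition grad_theta (I : nat) (gf gg : nat -> Vec -> Vec) (x : Vec) : Vec :=
  fun i k => sumR I (fun j => gf j x i k - gg j x i k).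

Definition stationary (I : nat) (ns : nat -> nat) (X : nat -> BVec -> Prop)
  (nc : nat) (h : nat -> Vec -> R) (gf gg : nat -> Vec -> Vec) (x : Vec) : Prop :=
  inXi I ns X nc h x /\
  forall y, inXi I ns X nc h y -> 0 <= inner I ns (grad_theta I gf gg x) (vsub y x).

Definition vcompact_set (I : nat) (ns : nat -> nat) (K : Vec -> Prop) : Prop :=
  (forall x, K x -> wf I ns x) /\
  forall u : nat -> Vec, (forall m, K (u m)) ->
    exists xbar (phi : nat -> nat), K xbar /\ (forall m, (phi m < phi (S m))%nat) /\
      forall eps, 0 < eps -> exists N, forall m, (N <= m)%nat ->
        vnorm I ns (vsub (u (phi m)) xbar) < eps.

Definition tilde_theta_i (I : nat) (ns : nat -> nat) (f g : nat -> Vec -> R)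
  (gf gg : nat -> Vec -> Vec) (tau : nat -> R) (i : nat) (xi : BVec) (y : Vec) : R :=
  f i (repl xi y i)
  + sumR I (fun j => if Nat.eqb j i then 0 else binner ns i (gf j y i) (bsub xi (y i)))
  - g i y
  - sumR I (fun j => binner ns i (gg j y i) (bsub xi (y i)))
  + tau i / 2 * (bnorm ns i (bsub xi (y i))) ^ 2.

Definition tilde_theta (I : nat) (ns : nat -> nat) (f g : nat -> Vec -> R)
  (gf gg : nat -> Vec -> Vec) (tau : nat -> R) (x y : Vec) : R :=
  sumR I (fun i => tilde_theta_i I ns f g gf gg tau i (x i) y).

Definition limit_point (I : nat) (ns : nat -> nat) (xs : nat -> Vec) (xbar : Vec) : Prop :=
  wf I ns xbar /\
  forall eps, 0 < eps -> forall N, exists m, (N <= m)%nat /\ vnorm I ns (vsub (xs m) xbar) < eps.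

(** Write [theta = sum_i (f_i - g_i)], [G(x) = grad theta(x)] and let
    [x^{nu+1}] minimize the strongly convex surrogate [tilde_theta(.; x^nu)]
    over the feasible set [Xi].

    The surrogate lies between the linearization of
       [theta] plus [sum tau_i/2 |d_i|^2] and the same plus
       [sum (L_i + tau_i/2) |d_i|^2].  Hence (a) a surrogate minimizer [xh]
       satisfies [theta(xh) + c |xh - x|^2 <= theta(x)] with
       [c = tau_min/2 - sum L > 0], and (b) for every feasible [z],
       [<G(x), z - xh> + C |z - x|^2 >= 0] with [C = sum (L_i + tau_i/2)].
    3. Asymptotics.  By (a) the iterates stay in the compact sublevel set of
       (A4), so a limit point [xb] exists and is feasible; [theta(xb)] bounds
       [theta(x^nu)] from below, so the steps vanish near [xb]; passing to
       the limit in (b) along iterates close to [xb] gives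
       [<G(xb), w - xb> + C |w - xb|^2 >= 0] on [Xi], and convexity of [Xi]
       turns this into stationarity. *)

From Stdlib Require Import Reals Lra Psatz Lia FunctionalExtensionality IndefiniteDescription.
Open Scope R_scope.

Lemma sumR_ext n F G : (forall i, (i < n)%nat -> F i = G i) -> sumR n F = sumR n G.
Proof.
  induction n as [|n IH]; simpl; intros H; auto.
  rewrite IH by (intros; apply H; lia). rewrite H by lia. reflexivity.
Qed.

Lemma sumR_add n F G : sumR n (fun i => F i + G i) = sumR n F + sumR n G.
Proof. induction n; simpl; [lra | rewrite IHn; lra]. Qed.

Lemma sumR_sub n F G : sumR n (fun i => F i - G i) = sumR n F - sumR n G.
Proof. induction n; simpl; [lra | rewrite IHn; lra]. Qed.

Lemma sumR_scal n c F : sumR n (fun i => c * F i) = c * sumR n F.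
Proof. induction n; simpl; [lra | rewrite IHn; lra]. Qed.

Lemma sumR_const n c : sumR n (fun _ => c) = INR n * c.
Proof. induction n; simpl sumR; [simpl; lra | rewrite IHn, S_INR; lra]. Qed.

Lemma sumR_le n F G : (forall i, (i < n)%nat -> F i <= G i) -> sumR n F <= sumR n G.
Proof.
  induction n as [|n IH]; simpl; intros H; [lra|].
  assert (F n <= G n) by (apply H; lia).
  assert (sumR n F <= sumR n G) by (apply IH; intros; apply H; lia). lra.
Qed.

Lemma sumR_nonneg n F : (forall i, (i < n)%nat -> 0 <= F i) -> 0 <= sumR n F.
Proof.
  intros H. apply Rle_trans with (sumR n (fun _ => 0)).
  - rewrite sumR_const. lra.
  - apply sumR_le; auto.
Qed.

Lemma sumR_term_le n F i :
  (forall j, (j < n)%nat -> 0 <= F j) -> (i < n)%nat -> F i <= sumR n F.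
Proof.
  induction n as [|n IH]; simpl; intros H Hi; [lia|].
  assert (0 <= sumR n F) by (apply sumR_nonneg; intros; apply H; lia).
  assert (0 <= F n) by (apply H; lia).
  destruct (Nat.eq_dec i n) as [->|Hne]; [lra|].
  assert (F i <= sumR n F) by (apply IH; [intros; apply H | ]; lia). lra.
Qed.

Lemma sumR_single n F i :
  (i < n)%nat -> (forall j, (j < n)%nat -> j <> i -> F j = 0) -> sumR n F = F i.
Proof.
  induction n as [|n IH]; simpl; intros Hi H; [lia|].
  destruct (Nat.eq_dec i n) as [->|Hne].
  - rewrite (sumR_ext n F (fun _ => 0)), sumR_const by (intros; apply H; lia). lra.
  - rewrite IH, (H n) by (auto; lia). lra.
Qed.

Lemma sumR_except n F i :
  (i < n)%nat -> sumR n (fun j => if Nat.eqb j i then 0 else F j) = sumR n F - F i.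
Proof.
  intros Hi.
  assert (E : sumR n (fun j => if Nat.eqb j i then F j else 0) = F i).
  { rewrite (sumR_single n _ i Hi), Nat.eqb_refl; [reflexivity|].
    intros j _ Hj. apply Nat.eqb_neq in Hj. rewrite Hj. reflexivity. }
  rewrite <- E, <- sumR_sub. apply sumR_ext. intros j _. destruct (Nat.eqb j i); lra.
Qed.

Lemma sumR_swap n m F :
  sumR n (fun i => sumR m (fun j => F i j)) = sumR m (fun j => sumR n (fun i => F i j)).
Proof.
  induction n; simpl.
  - rewrite sumR_const. lra.
  - rewrite IHn, <- sumR_add. reflexivity.
Qed.

Lemma sumR_abs n F : Rabs (sumR n F) <= sumR n (fun i => Rabs (F i)).
Proof.
  induction n; simpl; [rewrite Rabs_R0; lra|].
  eapply Rle_trans; [apply Rabs_triang | lra].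
Qed.

Lemma common_radius (n : nat) (P : nat -> R -> Prop) :
  (forall j, (j < n)%nat -> exists d, 0 < d /\ P j d) ->
  (forall j d d', 0 < d' <= d -> P j d -> P j d') ->
  exists d, 0 < d /\ forall j, (j < n)%nat -> P j d.
Proof.
  intros H Hmono. induction n as [|n IH].
  - exists 1. split; [lra | intros; lia].
  - destruct IH as [d1 [Hd1 H1]]; [intros; apply H; lia|].
    destruct (H n) as [d2 [Hd2 H2]]; [lia|].
    assert (Hm : 0 < Rmin d1 d2) by (apply Rmin_pos; auto).
    exists (Rmin d1 d2). split; auto. intros j Hj.
    destruct (Nat.eq_dec j n) as [->|Hne].
    + apply (Hmono n d2); auto. split; [exact Hm | apply Rmin_r].
    + apply (Hmono j d1); [split; [exact Hm | apply Rmin_l] | apply H1; lia].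
Qed.

Lemma Rabs_le_inv a b : Rabs a <= b -> - b <= a <= b.
Proof. unfold Rabs. destruct (Rcase_abs a); intros; lra. Qed.

Lemma le_of_le_plus_eps a b n : 0 <= n -> (forall eps, 0 < eps -> a <= b + eps * n) -> a <= b.
Proof.
  intros Hn H. destruct (Rle_dec a b) as [|Hab]; auto. exfalso.
  set (eps := (a - b) / (2 * (n + 1))).
  assert (Heps : 0 < eps) by (apply Rdiv_lt_0_compat; lra).
  assert (eps * n < a - b).
  { unfold eps, Rdiv. assert (/ (2 * (n + 1)) * (2 * (n + 1)) = 1) by (field; lra).
    assert (0 < / (2 * (n + 1))) by (apply Rinv_0_lt_compat; lra). nra. }
  specialize (H eps Heps). lra.
Qed.

Lemma nonneg_of_small_errors q M :
  0 <= M -> (forall eta, 0 < eta -> eta <= 1 -> - (eta * M) <= q) -> 0 <= q.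
Proof.
  intros HM H. apply (le_of_le_plus_eps 0 q M HM). intros eps He.
  destruct (Rle_dec eps 1) as [Hle|Hgt].
  - specialize (H eps He Hle). lra.
  - specialize (H 1 Rlt_0_1 (Rle_refl 1)). nra.
Qed.

Lemma nonneg_of_quadratic A B :
  0 <= B -> (forall t, 0 < t -> t <= 1 -> 0 <= t * A + t * t * B) -> 0 <= A.
Proof.
  intros HB H. apply (le_of_le_plus_eps 0 A B HB). intros eps He.
  destruct (Rle_dec eps 1) as [Hle|Hgt].
  - specialize (H eps He Hle).
    destruct (Rle_dec 0 (A + eps * B)); [lra | nra].
  - specialize (H 1 Rlt_0_1 (Rle_refl 1)). nra.
Qed.

Lemma quadratic_discriminant A B C :
  0 <= A -> (forall t, 0 <= A * (t * t) - 2 * B * t + C) -> B * B <= A * C.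
Proof.
  intros HA H. destruct (Req_dec A 0) as [HA0|HA0].
  - destruct (Req_dec B 0) as [->|HB]; [subst; lra|].
    specialize (H ((C + 1) / (2 * B))). rewrite HA0 in H.
    replace (0 * _ - 2 * B * ((C + 1) / (2 * B)) + C) with (-1) in H by (field; auto). lra.
  - specialize (H (B / A)).
    replace (A * (B / A * (B / A)) - 2 * B * (B / A) + C) with ((A * C - B * B) / A) in H
      by (field; auto).
    assert (0 < A) by lra.
    apply Rmult_le_compat_r with (r := A) in H; [|lra].
    unfold Rdiv in H. rewrite Rmult_assoc, Rinv_l, Rmult_0_l in H by lra. lra.
Qed.

Section Geometry.
Variables (I : nat) (ns : nat -> nat).

Definition coord_sum (x : Vec) : R := sumR I (fun i => sumR (ns i) (fun k => x i k)).

Lemma inner_as_coord_sum x y : inner I ns x y = coord_sum (fun i k => x i k * y i k).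
Proof. reflexivity. Qed.

Lemma coord_sum_ext x y :
  (forall i k, (i < I)%nat -> (k < ns i)%nat -> x i k = y i k) -> coord_sum x = coord_sum y.
Proof. intros H. apply sumR_ext. intros. apply sumR_ext. auto. Qed.

Lemma coord_sum_le x y :
  (forall i k, (i < I)%nat -> (k < ns i)%nat -> x i k <= y i k) -> coord_sum x <= coord_sum y.
Proof. intros H. apply sumR_le. intros. apply sumR_le. auto. Qed.

Lemma coord_sum_lin a b x y :
  coord_sum (fun i k => a * x i k + b * y i k) = a * coord_sum x + b * coord_sum y.
Proof.
  unfold coord_sum. rewrite <- !sumR_scal, <- sumR_add. apply sumR_ext. intros.
  rewrite <- !sumR_scal, <- sumR_add. reflexivity.
Qed.

Lemma inner_ext x y x' y' :
  (forall i k, (i < I)%nat -> (k < ns i)%nat -> x i k * y i k = x' i k * y' i k) ->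
  inner I ns x y = inner I ns x' y'.
Proof. intros H. apply coord_sum_ext. auto. Qed.

Lemma inner_comm x y : inner I ns x y = inner I ns y x.
Proof. apply inner_ext. intros. ring. Qed.

Lemma inner_lin_r a s t u v :
  inner I ns a (fun i k => s * u i k + t * v i k) = s * inner I ns a u + t * inner I ns a v.
Proof.
  rewrite !inner_as_coord_sum, <- coord_sum_lin. apply coord_sum_ext. intros. ring.
Qed.

Lemma inner_sub_r a u v : inner I ns a (vsub u v) = inner I ns a u - inner I ns a v.
Proof.
  replace (vsub u v) with (fun i k => 1 * u i k + (-1) * v i k)
    by (extensionality i; extensionality k; unfold vsub; ring).
  rewrite inner_lin_r. ring.
Qed.

Lemma inner_sub_l u v a : inner I ns (vsub u v) a = inner I ns u a - inner I ns v a.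
Proof. rewrite inner_comm, inner_sub_r, !(inner_comm a). reflexivity. Qed.

Lemma inner_scal_r a t v : inner I ns a (vscal t v) = t * inner I ns a v.
Proof.
  replace (vscal t v) with (fun i k => t * v i k + 0 * v i k)
    by (extensionality i; extensionality k; unfold vscal; ring).
  rewrite inner_lin_r. ring.
Qed.

Lemma inner_nonneg x : 0 <= inner I ns x x.
Proof.
  replace 0 with (coord_sum (fun _ _ => 0)).
  - apply coord_sum_le. intros. apply Rle_0_sqr.
  - unfold coord_sum. rewrite (sumR_ext I _ (fun _ => 0)), sumR_const; [ring|].
    intros. rewrite sumR_const. ring.
Qed.

Lemma vnorm_nonneg x : 0 <= vnorm I ns x.
Proof. apply sqrt_pos. Qed.

Lemma vnorm_sq x : vnorm I ns x * vnorm I ns x = inner I ns x x.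
Proof. apply sqrt_sqrt, inner_nonneg. Qed.

Lemma vnorm_ext x y :
  (forall i k, (i < I)%nat -> (k < ns i)%nat -> x i k = y i k) -> vnorm I ns x = vnorm I ns y.
Proof. intros H. unfold vnorm. f_equal. apply inner_ext. intros. rewrite H; auto. Qed.

Lemma vnorm_sym a b : vnorm I ns (vsub a b) = vnorm I ns (vsub b a).
Proof. unfold vnorm. f_equal. apply inner_ext. intros. unfold vsub. ring. Qed.

Lemma vnorm_scal t v : 0 <= t -> vnorm I ns (vscal t v) = t * vnorm I ns v.
Proof.
  intros Ht. unfold vnorm.
  replace (inner I ns (vscal t v) (vscal t v)) with ((t * t) * inner I ns v v).
  - rewrite sqrt_mult_alt by nra. rewrite sqrt_square by exact Ht. reflexivity.
  - rewrite inner_scal_r, (inner_comm (vscal t v)), inner_scal_r. ring.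
Qed.

Lemma vnorm_le_of_sq v e : 0 <= e -> inner I ns v v <= e * e -> vnorm I ns v <= e.
Proof. intros He H. rewrite <- vnorm_sq in H. pose proof (vnorm_nonneg v). nra. Qed.

Lemma sq_le_of_vnorm_le v e : vnorm I ns v <= e -> inner I ns v v <= e * e.
Proof. intros H. rewrite <- vnorm_sq. pose proof (vnorm_nonneg v). nra. Qed.

Lemma inner_expand s t u v :
  inner I ns (fun i k => s * u i k + t * v i k) (fun i k => s * u i k + t * v i k)
  = s * s * inner I ns u u + 2 * s * t * inner I ns u v + t * t * inner I ns v v.
Proof.
  rewrite !inner_as_coord_sum.
  rewrite (coord_sum_ext _ (fun i k => (s * s) * (u i k * u i k)
            + 1 * ((2 * s * t) * (u i k * v i k) + (t * t) * (v i k * v i k))))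
    by (intros; ring).
  rewrite !coord_sum_lin. ring.
Qed.

(** Cauchy--Schwarz inequality, from the nonnegativity of [|a - t b|^2]. *)
Lemma cauchy_schwarz a b : Rabs (inner I ns a b) <= vnorm I ns a * vnorm I ns b.
Proof.
  assert (Hq : inner I ns a b * inner I ns a b <= inner I ns b b * inner I ns a a).
  { apply quadratic_discriminant; [apply inner_nonneg|]. intros t.
    replace (inner I ns b b * (t * t) - 2 * inner I ns a b * t + inner I ns a a)
      with (inner I ns (fun i k => 1 * a i k + (- t) * b i k)
                       (fun i k => 1 * a i k + (- t) * b i k))
      by (rewrite inner_expand; ring).
    apply inner_nonneg. }
  rewrite <- (Rabs_pos_eq (vnorm I ns a * vnorm I ns b))
    by (apply Rmult_le_pos; apply vnorm_nonneg).
  apply Rsqr_le_abs_0. unfold Rsqr.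
  replace (vnorm I ns a * vnorm I ns b * (vnorm I ns a * vnorm I ns b))
    with ((vnorm I ns b * vnorm I ns b) * (vnorm I ns a * vnorm I ns a)) by ring.
  rewrite !vnorm_sq. exact Hq.
Qed.

Lemma vnorm_add p q : vnorm I ns (vadd p q) <= vnorm I ns p + vnorm I ns q.
Proof.
  apply vnorm_le_of_sq; [pose proof (vnorm_nonneg p); pose proof (vnorm_nonneg q); lra|].
  replace (vadd p q) with (fun i k => 1 * p i k + 1 * q i k)
    by (extensionality i; extensionality k; unfold vadd; ring).
  rewrite inner_expand, <- !vnorm_sq.
  pose proof (Rabs_le_inv _ _ (cauchy_schwarz p q)). nra.
Qed.

Lemma vnorm_triangle x y z :
  vnorm I ns (vsub x z) <= vnorm I ns (vsub x y) + vnorm I ns (vsub y z).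
Proof.
  replace (vsub x z) with (vadd (vsub x y) (vsub y z))
    by (extensionality i; extensionality k; unfold vadd, vsub; ring).
  apply vnorm_add.
Qed.

Lemma vnorm_sub_le p q : vnorm I ns (vsub p q) <= vnorm I ns p + vnorm I ns q.
Proof.
  replace (vsub p q) with (vadd p (vscal (-1) q))
    by (extensionality i; extensionality k; unfold vadd, vsub, vscal; ring).
  eapply Rle_trans; [apply vnorm_add|].
  replace (vnorm I ns (vscal (-1) q)) with (vnorm I ns q); [lra|].
  unfold vnorm. f_equal. rewrite inner_scal_r, (inner_comm (vscal (-1) q)), inner_scal_r. ring.
Qed.

Lemma vnorm_sumR n (F : nat -> Vec) :
  vnorm I ns (fun i k => sumR n (fun j => F j i k)) <= sumR n (fun j => vnorm I ns (F j)).
Proof.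
  induction n as [|n IH]; simpl.
  - replace (fun _ _ : nat => 0) with (vscal 0 (F O))
      by (extensionality i; extensionality k; unfold vscal; ring).
    rewrite vnorm_scal by lra. lra.
  - change (fun i k => sumR n (fun j => F j i k) + F n i k)
      with (vadd (fun i k => sumR n (fun j => F j i k)) (F n)).
    eapply Rle_trans; [apply vnorm_add | lra].
Qed.

Lemma eq_of_vnorm_sub_0 x y :
  wf I ns x -> wf I ns y -> vnorm I ns (vsub x y) = 0 -> x = y.
Proof.
  intros Wx Wy H.
  assert (Hsq : inner I ns (vsub x y) (vsub x y) = 0) by (rewrite <- vnorm_sq, H; ring).
  extensionality i; extensionality k.
  destruct (Compare_dec.lt_dec i I) as [Hi|Hi];
    [destruct (Compare_dec.lt_dec k (ns i)) as [Hk|Hk]|].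
  - set (d := vsub x y).
    assert (Hblock : binner ns i (d i) (d i) <= 0).
    { rewrite <- Hsq. apply (sumR_term_le I (fun i => binner ns i (d i) (d i))); auto.
      intros; apply sumR_nonneg; intros; apply Rle_0_sqr. }
    assert (d i k * d i k <= binner ns i (d i) (d i)).
    { apply (sumR_term_le (ns i) (fun k => d i k * d i k)); auto. intros; apply Rle_0_sqr. }
    assert (d i k = 0) by nra. unfold d, vsub in *. lra.
  - rewrite Wx, Wy by (intros [_ ?]; lia). reflexivity.
  - rewrite Wx, Wy by (intros [? _]; lia). reflexivity.
Qed.

End Geometry.

Section ConvexDifferentiable.
Variables (I : nat) (ns : nat -> nat) (U : Vec -> Prop) (f : Vec -> R) (gf : Vec -> Vec).
Hypothesis Hconv : convex_fun_on U f.
Hypothesis Hgrad : has_grad_on I ns U f gf.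

(** Gradient inequality: a differentiable convex function lies above its
    tangent planes.  Compare the convex combination [x + t (y - x)], for
    small [t], with the first-order expansion at [x]. *)
Lemma gradient_inequality x y :
  U x -> U y -> wf I ns x -> wf I ns y -> f x + inner I ns (gf x) (vsub y x) <= f y.
Proof.
  intros Ux Uy Wx Wy.
  set (D := inner I ns (gf x) (vsub y x)). set (nd := vnorm I ns (vsub y x)).
  assert (Hnd : 0 <= nd) by apply vnorm_nonneg.
  cut (D <= f y - f x); [lra|].
  apply (le_of_le_plus_eps _ _ nd Hnd). intros eps Heps.
  destruct (proj2 (Hgrad x Ux) eps Heps) as [delta [Hd Hexp]].
  set (t := Rmin 1 (delta / (2 * (nd + 1)))).
  assert (Ht0 : 0 < t) by (apply Rmin_pos; [lra | apply Rdiv_lt_0_compat; lra]).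
  assert (Ht1 : t <= 1) by apply Rmin_l.
  assert (Ht2 : t * nd < delta).
  { assert (t * nd <= delta / (2 * (nd + 1)) * nd)
      by (apply Rmult_le_compat_r; [lra | apply Rmin_r]).
    assert (delta / (2 * (nd + 1)) * nd < delta).
    { unfold Rdiv. assert (/ (2 * (nd + 1)) * (2 * (nd + 1)) = 1) by (field; lra).
      assert (0 < / (2 * (nd + 1))) by (apply Rinv_0_lt_compat; lra). nra. }
    lra. }
  set (p := vadd (vscal t y) (vscal (1 - t) x)).
  assert (Ep : vsub p x = vscal t (vsub y x))
    by (extensionality i; extensionality k; unfold p, vsub, vadd, vscal; ring).
  assert (Wp : wf I ns p)
    by (intros i k Hik; unfold p, vadd, vscal; rewrite Wx, Wy by auto; ring).
  assert (Hclose : vnorm I ns (vsub p x) < delta) by (rewrite Ep, vnorm_scal by lra; exact Ht2).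
  specialize (Hexp p Wp Hclose).
  rewrite Ep, inner_scal_r, vnorm_scal in Hexp by lra. fold D nd in Hexp.
  apply Rabs_le_inv in Hexp.
  assert (Hcv : f p <= t * f y + (1 - t) * f x) by (apply Hconv; auto; lra).
  assert (t * (D - (f y - f x + eps * nd)) <= 0) by nra.
  assert (D - (f y - f x + eps * nd) <= 0).
  { destruct (Rle_dec (D - (f y - f x + eps * nd)) 0); auto. nra. }
  lra.
Qed.

Lemma descent_inequality Lc x y :
  U x -> U y -> wf I ns x -> wf I ns y -> 0 <= Lc ->
  vnorm I ns (vsub (gf y) (gf x)) <= Lc * vnorm I ns (vsub y x) ->
  f y <= f x + inner I ns (gf x) (vsub y x) + Lc * inner I ns (vsub y x) (vsub y x).
Proof.
  intros Ux Uy Wx Wy HL Hlip.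
  pose proof (gradient_inequality y x Uy Ux Wy Wx) as Hyx.
  assert (E : inner I ns (gf y) (vsub x y)
              = - inner I ns (gf x) (vsub y x) - inner I ns (vsub (gf y) (gf x)) (vsub y x)).
  { rewrite inner_sub_l.
    replace (vsub x y) with (vscal (-1) (vsub y x))
      by (extensionality i; extensionality k; unfold vscal, vsub; ring).
    rewrite inner_scal_r. ring. }
  rewrite E in Hyx.
  pose proof (Rabs_le_inv _ _ (cauchy_schwarz I ns (vsub (gf y) (gf x)) (vsub y x))).
  pose proof (vnorm_sq I ns (vsub y x)). pose proof (vnorm_nonneg I ns (vsub y x)).
  pose proof (vnorm_nonneg I ns (vsub (gf y) (gf x))).
  assert (vnorm I ns (vsub (gf y) (gf x)) * vnorm I ns (vsub y x)
          <= Lc * vnorm I ns (vsub y x) * vnorm I ns (vsub y x))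
    by (apply Rmult_le_compat_r; auto).
  nra.
Qed.

End ConvexDifferentiable.

Lemma differentiable_local_bound I ns U f gf x :
  has_grad_on I ns U f gf -> U x ->
  exists d, 0 < d /\ forall y, wf I ns y -> vnorm I ns (vsub y x) < d ->
    Rabs (f y - f x) <= (vnorm I ns (gf x) + 1) * vnorm I ns (vsub y x).
Proof.
  intros Hg Ux. destruct (proj2 (Hg x Ux) 1 Rlt_0_1) as [d [Hd H]].
  exists d. split; auto. intros y Wy Hy. specialize (H y Wy Hy).
  pose proof (cauchy_schwarz I ns (gf x) (vsub y x)).
  replace (f y - f x)
    with ((f y - f x - inner I ns (gf x) (vsub y x)) + inner I ns (gf x) (vsub y x)) by ring.
  eapply Rle_trans; [apply Rabs_triang | lra].
Qed.

Section Surrogate.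
Variables (I : nat) (ns : nat -> nat) (X : nat -> BVec -> Prop).
Variables (f g : nat -> Vec -> R) (gf gg : nat -> Vec -> Vec) (L tau : nat -> R).

Lemma binner_grad_theta x i d :
  binner ns i (grad_theta I gf gg x i) d
  = sumR I (fun j => binner ns i (gf j x i) d - binner ns i (gg j x i) d).
Proof.
  unfold binner, grad_theta.
  rewrite (sumR_ext I _ (fun j => sumR (ns i) (fun k => (gf j x i k - gg j x i k) * d k)))
    by (intros; rewrite <- sumR_sub; apply sumR_ext; intros; ring).
  rewrite sumR_swap. apply sumR_ext. intros k _.
  rewrite Rmult_comm, <- sumR_scal. apply sumR_ext. intros. ring.
Qed.

Lemma inner_grad_theta x r :
  inner I ns (grad_theta I gf gg x) r
  = sumR I (fun j => inner I ns (gf j x) r - inner I ns (gg j x) r).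
Proof.
  unfold inner at 1.
  rewrite (sumR_ext I _ (fun i => sumR I (fun j =>
             binner ns i (gf j x i) (r i) - binner ns i (gg j x i) (r i))))
    by (intros; apply binner_grad_theta).
  rewrite sumR_swap. apply sumR_ext. intros. apply sumR_sub.
Qed.

Lemma inner_repl a u x i :
  (i < I)%nat -> inner I ns a (vsub (repl u x i) x) = binner ns i (a i) (bsub u (x i)).
Proof.
  intros Hi. unfold inner. rewrite (sumR_single I _ i Hi).
  - unfold vsub, repl. rewrite Nat.eqb_refl. reflexivity.
  - intros j _ Hj. apply Nat.eqb_neq in Hj.
    unfold binner. rewrite (sumR_ext _ _ (fun _ => 0)), sumR_const; [ring|].
    intros. unfold vsub, repl. rewrite Hj. ring.
Qed.

Lemma inner_repl_sq u x i :
  (i < I)%nat ->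
  inner I ns (vsub (repl u x i) x) (vsub (repl u x i) x) = binner ns i (bsub u (x i)) (bsub u (x i)).
Proof.
  intros Hi. rewrite inner_repl by exact Hi. unfold vsub, repl. rewrite Nat.eqb_refl. reflexivity.
Qed.

Lemma inX_repl x i u :
  inX I ns X x -> (i < I)%nat -> X i u -> bwf ns i u -> inX I ns X (repl u x i).
Proof.
  intros [Wx Bx] Hi Xu Bu. split.
  - intros j k Hjk. unfold repl. destruct (Nat.eqb_spec j i) as [->|Hne].
    + apply Bu. destruct (Nat.lt_ge_cases k (ns i)); auto. exfalso; auto.
    + apply Wx; auto.
  - intros j Hj. unfold repl. destruct (Nat.eqb_spec j i) as [->|]; auto.
Qed.

Lemma tilde_theta_diag x : tilde_theta I ns f g gf gg tau x x = theta I f g x.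
Proof.
  unfold tilde_theta, theta, tilde_theta_i. apply sumR_ext. intros i Hi.
  assert (Hrepl : repl (x i) x i = x).
  { extensionality j; extensionality k. unfold repl.
    destruct (Nat.eqb_spec j i); subst; reflexivity. }
  assert (Hz : forall a, binner ns i a (bsub (x i) (x i)) = 0).
  { intros. unfold binner. rewrite (sumR_ext _ _ (fun _ => 0)), sumR_const; [ring|].
    intros. unfold bsub. ring. }
  rewrite Hrepl, (sumR_ext I _ (fun _ => 0)), (sumR_ext I (fun j => binner _ _ _ _) (fun _ => 0)),
    !sumR_const by (intros j _; try destruct (Nat.eqb j i); auto).
  unfold bnorm. rewrite Hz, sqrt_0. ring.
Qed.

Lemma tilde_theta_i_expand i w x :
  (i < I)%nat ->
  tilde_theta_i I ns f g gf gg tau i (w i) x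
  = f i (repl (w i) x i) - g i x + binner ns i (grad_theta I gf gg x i) (bsub (w i) (x i))
    - binner ns i (gf i x i) (bsub (w i) (x i))
    + tau i / 2 * binner ns i (bsub (w i) (x i)) (bsub (w i) (x i)).
Proof.
  intros Hi. unfold tilde_theta_i.
  rewrite sumR_except, binner_grad_theta, sumR_sub by exact Hi.
  unfold bnorm. rewrite pow2_sqrt by (apply sumR_nonneg; intros; apply Rle_0_sqr). ring.
Qed.

Lemma tilde_theta_lower w x :
  (forall i, (i < I)%nat ->
     f i x + inner I ns (gf i x) (vsub (repl (w i) x i) x) <= f i (repl (w i) x i)) ->
  theta I f g x + inner I ns (grad_theta I gf gg x) (vsub w x)
  + sumR I (fun i => tau i / 2 * binner ns i (bsub (w i) (x i)) (bsub (w i) (x i)))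
  <= tilde_theta I ns f g gf gg tau w x.
Proof.
  intros H. unfold theta, inner at 1, tilde_theta. rewrite <- !sumR_add.
  apply sumR_le. intros i Hi. rewrite tilde_theta_i_expand by exact Hi.
  specialize (H i Hi). rewrite inner_repl in H by exact Hi.
  change (vsub w x i) with (bsub (w i) (x i)). lra.
Qed.

Lemma tilde_theta_upper w x :
  (forall i, (i < I)%nat ->
     f i (repl (w i) x i) <= f i x + inner I ns (gf i x) (vsub (repl (w i) x i) x)
       + L i * inner I ns (vsub (repl (w i) x i) x) (vsub (repl (w i) x i) x)) ->
  tilde_theta I ns f g gf gg tau w x
  <= theta I f g x + inner I ns (grad_theta I gf gg x) (vsub w x)
     + sumR I (fun i => (L i + tau i / 2) * binner ns i (bsub (w i) (x i)) (bsub (w i) (x i))).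
Proof.
  intros H. unfold theta, inner at 1, tilde_theta. rewrite <- !sumR_add.
  apply sumR_le. intros i Hi. rewrite tilde_theta_i_expand by exact Hi.
  specialize (H i Hi). rewrite inner_repl_sq, inner_repl in H by exact Hi.
  change (vsub w x i) with (bsub (w i) (x i)). lra.
Qed.

Hypothesis HXsub : forall i, (i < I)%nat -> bsubset ns i (X i).
Hypothesis Hf_lower : forall i, (i < I)%nat -> forall a b, inX I ns X a -> inX I ns X b ->
  f i a + inner I ns (gf i a) (vsub b a) <= f i b.
Hypothesis Hf_upper : forall i, (i < I)%nat -> forall a b, inX I ns X a -> inX I ns X b ->
  f i b <= f i a + inner I ns (gf i a) (vsub b a) + L i * inner I ns (vsub b a) (vsub b a).

Lemma tilde_theta_lower_on_X w x :
  inX I ns X x -> inX I ns X w ->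
  theta I f g x + inner I ns (grad_theta I gf gg x) (vsub w x)
  + sumR I (fun i => tau i / 2 * binner ns i (bsub (w i) (x i)) (bsub (w i) (x i)))
  <= tilde_theta I ns f g gf gg tau w x.
Proof.
  intros Hx Hw. apply tilde_theta_lower. intros i Hi.
  apply Hf_lower; auto. apply inX_repl; auto; [apply Hw | apply HXsub]; auto; apply Hw; auto.
Qed.

Lemma tilde_theta_upper_on_X w x :
  inX I ns X x -> inX I ns X w ->
  tilde_theta I ns f g gf gg tau w x
  <= theta I f g x + inner I ns (grad_theta I gf gg x) (vsub w x)
     + sumR I (fun i => (L i + tau i / 2) * binner ns i (bsub (w i) (x i)) (bsub (w i) (x i))).
Proof.
  intros Hx Hw. apply tilde_theta_upper. intros i Hi.
  apply Hf_upper; auto. apply inX_repl; auto; [apply Hw | apply HXsub]; auto; apply Hw; auto.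
Qed.

Hypothesis Hg_lower : forall i, (i < I)%nat -> forall a b, inX I ns X a -> inX I ns X b ->
  g i a + inner I ns (gg i a) (vsub b a) <= g i b.

Lemma theta_upper x y :
  inX I ns X x -> inX I ns X y ->
  theta I f g y <= theta I f g x + inner I ns (grad_theta I gf gg x) (vsub y x)
                   + sumR I L * inner I ns (vsub y x) (vsub y x).
Proof.
  intros Hx Hy. unfold theta. rewrite inner_grad_theta, Rmult_comm, <- sumR_scal, <- !sumR_add.
  apply sumR_le. intros j Hj.
  pose proof (Hf_upper j Hj x y Hx Hy). pose proof (Hg_lower j Hj x y Hx Hy). lra.
Qed.

Lemma sufficient_decrease c x xh :
  (forall i, (i < I)%nat -> c <= tau i / 2 - sumR I L) ->
  inX I ns X x -> inX I ns X xh ->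
  tilde_theta I ns f g gf gg tau xh x <= tilde_theta I ns f g gf gg tau x x ->
  theta I f g xh + c * inner I ns (vsub xh x) (vsub xh x) <= theta I f g x.
Proof.
  intros Hc Hx Hxh Hmin. rewrite tilde_theta_diag in Hmin.
  pose proof (tilde_theta_lower_on_X xh x Hx Hxh) as Hlow.
  pose proof (theta_upper x xh Hx Hxh) as Hup.
  assert ((c + sumR I L) * inner I ns (vsub xh x) (vsub xh x)
          <= sumR I (fun i => tau i / 2 * binner ns i (bsub (xh i) (x i)) (bsub (xh i) (x i)))).
  { unfold inner. rewrite <- sumR_scal. apply sumR_le. intros i Hi.
    apply Rmult_le_compat_r; [apply sumR_nonneg; intros; apply Rle_0_sqr|].
    specialize (Hc i Hi). lra. }
  lra.
Qed.

Hypothesis HL0 : forall i, (i < I)%nat -> 0 <= L i.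
Hypothesis Htau_pos : forall i, (i < I)%nat -> 0 < tau i.

Lemma surrogate_minimizer_residual x xh z :
  inX I ns X x -> inX I ns X xh -> inX I ns X z ->
  tilde_theta I ns f g gf gg tau xh x <= tilde_theta I ns f g gf gg tau z x ->
  0 <= inner I ns (grad_theta I gf gg x) (vsub z xh)
       + sumR I (fun i => L i + tau i / 2) * inner I ns (vsub z x) (vsub z x).
Proof.
  intros Hx Hxh Hz Hmin.
  pose proof (tilde_theta_lower_on_X xh x Hx Hxh) as Hlow.
  pose proof (tilde_theta_upper_on_X z x Hx Hz) as Hup.
  assert (0 <= sumR I (fun i => tau i / 2 * binner ns i (bsub (xh i) (x i)) (bsub (xh i) (x i)))).
  { apply sumR_nonneg. intros i Hi. apply Rmult_le_pos.
    - specialize (Htau_pos i Hi). lra.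
    - apply sumR_nonneg. intros. apply Rle_0_sqr. }
  assert (sumR I (fun i => (L i + tau i / 2) * binner ns i (bsub (z i) (x i)) (bsub (z i) (x i)))
          <= sumR I (fun i => L i + tau i / 2) * inner I ns (vsub z x) (vsub z x)).
  { rewrite Rmult_comm, <- sumR_scal. apply sumR_le. intros i Hi.
    rewrite (Rmult_comm _ (L i + _)). apply Rmult_le_compat_l.
    - specialize (Htau_pos i Hi). specialize (HL0 i Hi). lra.
    - apply (sumR_term_le I (fun i => binner ns i (vsub z x i) (vsub z x i))); auto.
      intros. apply sumR_nonneg. intros. apply Rle_0_sqr. }
  rewrite inner_sub_r.
  replace (inner I ns (grad_theta I gf gg x) z - inner I ns (grad_theta I gf gg x) xh)
    with (inner I ns (grad_theta I gf gg x) (vsub z x) - inner I ns (grad_theta I gf gg x) (vsub xh x))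
    by (rewrite !inner_sub_r; ring).
  lra.
Qed.

End Surrogate.

Lemma theta_local_bound I ns U (f g : nat -> Vec -> R) (gf gg : nat -> Vec -> Vec) x :
  (forall i, (i < I)%nat -> has_grad_on I ns U (f i) (gf i)) ->
  (forall i, (i < I)%nat -> has_grad_on I ns U (g i) (gg i)) -> U x ->
  exists M d, 0 <= M /\ 0 < d /\ forall y, wf I ns y -> vnorm I ns (vsub y x) < d ->
    Rabs (theta I f g y - theta I f g x) <= M * vnorm I ns (vsub y x).
Proof.
  intros Hf Hg Ux.
  destruct (common_radius I (fun i d => forall y, wf I ns y -> vnorm I ns (vsub y x) < d ->
      Rabs (f i y - f i x) <= (vnorm I ns (gf i x) + 1) * vnorm I ns (vsub y x) /\
      Rabs (g i y - g i x) <= (vnorm I ns (gg i x) + 1) * vnorm I ns (vsub y x)))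
    as [d [Hd Hnear]].
  { intros j Hj.
    destruct (differentiable_local_bound I ns U (f j) (gf j) x (Hf j Hj) Ux) as [d1 [Hd1 H1]].
    destruct (differentiable_local_bound I ns U (g j) (gg j) x (Hg j Hj) Ux) as [d2 [Hd2 H2]].
    exists (Rmin d1 d2). split; [apply Rmin_pos; auto|]. intros y Wy Hy. split.
    - apply H1; auto. eapply Rlt_le_trans; [exact Hy | apply Rmin_l].
    - apply H2; auto. eapply Rlt_le_trans; [exact Hy | apply Rmin_r]. }
  { intros j d0 d' Hd' P y Wy Hy. apply P; auto. lra. }
  exists (sumR I (fun i => vnorm I ns (gf i x) + 1 + (vnorm I ns (gg i x) + 1))), d.
  split; [|split; auto].
  { apply sumR_nonneg. intros.
    pose proof (vnorm_nonneg I ns (gf i x)). pose proof (vnorm_nonneg I ns (gg i x)). lra. }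
  intros y Wy Hy. unfold theta. rewrite <- sumR_sub.
  eapply Rle_trans; [apply sumR_abs|].
  rewrite Rmult_comm, <- sumR_scal. apply sumR_le. intros i Hi.
  destruct (Hnear i Hi y Wy Hy) as [H1 H2].
  replace (f i y - g i y - (f i x - g i x)) with ((f i y - f i x) + - (g i y - g i x)) by ring.
  eapply Rle_trans; [apply Rabs_triang|]. rewrite Rabs_Ropp. lra.
Qed.

Lemma grad_theta_continuous I ns U (gf gg : nat -> Vec -> Vec) x :
  (forall i, (i < I)%nat -> cont_on I ns U (gf i)) ->
  (forall i, (i < I)%nat -> cont_on I ns U (gg i)) -> U x ->
  forall eps, 0 < eps -> exists d, 0 < d /\ forall y, U y -> vnorm I ns (vsub y x) < d ->
    vnorm I ns (vsub (grad_theta I gf gg y) (grad_theta I gf gg x)) <= eps.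
Proof.
  intros Hf Hg Ux eps Heps.
  set (e := eps / (2 * (INR I + 1))).
  assert (He : 0 < e) by (apply Rdiv_lt_0_compat; pose proof (pos_INR I); lra).
  destruct (common_radius I (fun j d => forall y, U y -> vnorm I ns (vsub y x) < d ->
      vnorm I ns (vsub (gf j y) (gf j x)) < e /\ vnorm I ns (vsub (gg j y) (gg j x)) < e))
    as [d [Hd Hnear]].
  { intros j Hj.
    destruct (Hf j Hj x Ux e He) as [d1 [Hd1 H1]]. destruct (Hg j Hj x Ux e He) as [d2 [Hd2 H2]].
    exists (Rmin d1 d2). split; [apply Rmin_pos; auto|]. intros y Uy Hy. split.
    - apply H1; auto. eapply Rlt_le_trans; [exact Hy | apply Rmin_l].
    - apply H2; auto. eapply Rlt_le_trans; [exact Hy | apply Rmin_r]. }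
  { intros j d0 d' Hd' P y Uy Hy. apply P; auto. lra. }
  exists d. split; auto. intros y Uy Hy.
  rewrite (vnorm_ext I ns _ (fun i k => sumR I (fun j =>
             vsub (vsub (gf j y) (gf j x)) (vsub (gg j y) (gg j x)) i k)))
    by (intros; unfold grad_theta, vsub; rewrite <- sumR_sub; apply sumR_ext; intros; ring).
  eapply Rle_trans; [apply vnorm_sumR|].
  apply Rle_trans with (sumR I (fun _ => 2 * e)).
  - apply sumR_le. intros j Hj. destruct (Hnear j Hj y Uy Hy).
    eapply Rle_trans; [apply vnorm_sub_le | lra].
  - rewrite sumR_const. unfold e.
    replace (INR I * (2 * (eps / (2 * (INR I + 1))))) with (eps * (INR I / (INR I + 1)))
      by (field; pose proof (pos_INR I); lra).
    assert (INR I / (INR I + 1) <= 1)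
      by (pose proof (pos_INR I); apply Rmult_le_reg_r with (INR I + 1); [lra|];
          unfold Rdiv; rewrite Rmult_assoc, Rinv_l; lra).
    nra.
Qed.

Lemma strictly_increasing_ge (phi : nat -> nat) :
  (forall m, (phi m < phi (S m))%nat) -> forall m, (m <= phi m)%nat.
Proof. intros H m. induction m; [lia|]. specialize (H m). lia. Qed.

Lemma compact_limit_point_exists I ns K (xs : nat -> Vec) :
  vcompact_set I ns K -> (forall m, K (xs m)) -> exists xb, limit_point I ns xs xb.
Proof.
  intros [HKwf HKseq] HK. destruct (HKseq xs HK) as [xb [phi [Kxb [Hphi Hcv]]]].
  exists xb. split; [apply HKwf; auto|]. intros eps Heps N.
  destruct (Hcv eps Heps) as [N0 HN0]. exists (phi (max N N0)).
  pose proof (strictly_increasing_ge phi Hphi (max N N0)).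
  split; [lia | apply HN0; lia].
Qed.

Lemma compact_contains_limit_points I ns K (xs : nat -> Vec) xb :
  vcompact_set I ns K -> (forall m, K (xs m)) -> limit_point I ns xs xb -> K xb.
Proof.
  intros [HKwf HKseq] HK [Wxb Hlp].
  assert (Hsel : forall k : nat, exists m, vnorm I ns (vsub (xs m) xb) < / (INR k + 1)).
  { intros k. assert (Hk : 0 < / (INR k + 1)) by (apply Rinv_0_lt_compat; pose proof (pos_INR k); lra).
    destruct (Hlp _ Hk O) as [m [_ Hm]]. eauto. }
  destruct (functional_choice _ Hsel) as [F HF].
  destruct (HKseq (fun k => xs (F k)) (fun k => HK (F k))) as [x' [phi [Kx' [Hphi Hcv]]]].
  replace xb with x'; [exact Kx'|]. symmetry.
  apply eq_of_vnorm_sub_0 with I ns; auto.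
  apply Rle_antisym; [|apply vnorm_nonneg].
  apply (le_of_le_plus_eps _ 0 1); [lra|]. intros eps Heps.
  destruct (Hcv (eps / 2)) as [N0 HN0]; [lra|].
  destruct (archimed_cor1 (eps / 2)) as [N1 [HN1 HN1pos]]; [lra|].
  set (m := max N0 N1). pose proof (strictly_increasing_ge phi Hphi m).
  pose proof (vnorm_triangle I ns xb (xs (F (phi m))) x').
  specialize (HN0 m (Nat.le_max_l _ _)). specialize (HF (phi m)). rewrite vnorm_sym in HF.
  assert (/ (INR (phi m) + 1) < / INR N1).
  { apply Rinv_lt_contravar.
    - apply Rmult_lt_0_compat; [apply lt_0_INR; lia | pose proof (pos_INR (phi m)); lra].
    - assert (INR N1 <= INR (phi m)) by (apply le_INR; lia). lra. }
  lra.
Qed.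

Lemma residual_perturbation I ns (G G' xb x x1 w : Vec) (C eta : R) :
  0 <= C -> 0 < eta <= 1 ->
  vnorm I ns (vsub G' G) <= eta -> vnorm I ns (vsub x xb) <= eta ->
  vnorm I ns (vsub x1 xb) <= eta ->
  0 <= inner I ns G' (vsub w x1) + C * inner I ns (vsub w x) (vsub w x) ->
  - (eta * (vnorm I ns G + vnorm I ns (vsub w xb) + 1 + C * (2 * vnorm I ns (vsub w xb) + 1)))
  <= inner I ns G (vsub w xb) + C * inner I ns (vsub w xb) (vsub w xb).
Proof.
  intros HC Heta HG Hx Hx1 Hres.
  set (nD := vnorm I ns (vsub w xb)). set (nG := vnorm I ns G).
  assert (HnD : 0 <= nD) by apply vnorm_nonneg. assert (HnG : 0 <= nG) by apply vnorm_nonneg.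
  assert (Hsplit : inner I ns G' (vsub w x1)
           = inner I ns G (vsub w xb) + inner I ns G (vsub xb x1) + inner I ns (vsub G' G) (vsub w x1)).
  { rewrite inner_sub_l, !inner_sub_r. ring. }
  assert (Hshift : inner I ns G (vsub xb x1) <= nG * eta).
  { pose proof (Rabs_le_inv _ _ (cauchy_schwarz I ns G (vsub xb x1))).
    rewrite vnorm_sym in H. fold nG in H.
    assert (nG * vnorm I ns (vsub x1 xb) <= nG * eta) by (apply Rmult_le_compat_l; auto). lra. }
  assert (Hw1 : vnorm I ns (vsub w x1) <= nD + eta).
  { pose proof (vnorm_triangle I ns w xb x1). rewrite (vnorm_sym I ns xb x1) in H. fold nD in H. lra. }
  assert (Hgrad : inner I ns (vsub G' G) (vsub w x1) <= eta * (nD + 1)).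
  { pose proof (Rabs_le_inv _ _ (cauchy_schwarz I ns (vsub G' G) (vsub w x1))).
    assert (vnorm I ns (vsub G' G) * vnorm I ns (vsub w x1) <= eta * (nD + eta))
      by (apply Rmult_le_compat; auto using vnorm_nonneg).
    nra. }
  assert (Hquad : inner I ns (vsub w x) (vsub w x) <= nD * nD + eta * (2 * nD + 1)).
  { assert (vnorm I ns (vsub w x) <= nD + eta).
    { pose proof (vnorm_triangle I ns w xb x). rewrite (vnorm_sym I ns xb x) in H. fold nD in H. lra. }
    apply sq_le_of_vnorm_le in H. nra. }
  rewrite <- (vnorm_sq I ns (vsub w xb)). fold nD.
  assert (C * inner I ns (vsub w x) (vsub w x) <= C * (nD * nD + eta * (2 * nD + 1)))
    by (apply Rmult_le_compat_l; auto).
  nra.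
Qed.

(** Passing from the quadratic residual inequality to stationarity, using the
    convexity of the feasible set: test it at [xb + t (z - xb)] and let [t -> 0]. *)
Lemma stationary_of_residual I ns (K : Vec -> Prop) (G xb : Vec) (C : R) :
  vconvex_set I ns K -> K xb -> 0 <= C ->
  (forall w, K w -> 0 <= inner I ns G (vsub w xb) + C * inner I ns (vsub w xb) (vsub w xb)) ->
  forall z, K z -> 0 <= inner I ns G (vsub z xb).
Proof.
  intros HK Kxb HC Hres z Kz.
  apply (nonneg_of_quadratic _ (C * inner I ns (vsub z xb) (vsub z xb)));
    [apply Rmult_le_pos; auto; apply inner_nonneg|].
  intros t Ht0 Ht1.
  specialize (Hres _ (HK z xb t Kz Kxb (conj (Rlt_le _ _ Ht0) Ht1))).
  replace (vsub (vadd (vscal t z) (vscal (1 - t) xb)) xb) with (vscal t (vsub z xb)) in Hres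
    by (extensionality i; extensionality k; unfold vsub, vadd, vscal; ring).
  rewrite !inner_scal_r, (inner_comm I ns (vscal t _)), inner_scal_r in Hres. lra.
Qed.

Lemma inXi_convex I ns (X : nat -> BVec -> Prop) nc (h : nat -> Vec -> R) (U : Vec -> Prop) :
  (forall i, (i < I)%nat -> bconvex (X i)) -> (forall x, inX I ns X x -> U x) ->
  (forall j, (j < nc)%nat -> convex_fun_on U (h j)) ->
  vconvex_set I ns (inXi I ns X nc h).
Proof.
  intros HX HXU Hh a b t [[Wa Ba] Ha] [[Wb Bb] Hb] Ht.
  split; [split|].
  - intros i k Hik. unfold vadd, vscal. rewrite Wa, Wb by auto. ring.
  - intros i Hi. exact (HX i Hi _ _ t (Ba i Hi) (Bb i Hi) Ht).
  - intros j Hj. eapply Rle_trans.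
    + apply Hh; auto; apply HXU; split; auto.
    + specialize (Ha j Hj). specialize (Hb j Hj). nra.
Qed.

Section Algorithm.
Variables (I : nat) (ns : nat -> nat) (nc : nat) (X : nat -> BVec -> Prop).
Variables (f g h : nat -> Vec -> R) (gf gg : nat -> Vec -> Vec) (L tau : nat -> R).
Variables (U : Vec -> Prop) (x0 : Vec) (xs : nat -> Vec).

Hypothesis HXU : forall x, inX I ns X x -> U x.
Hypothesis Hf : forall i, (i < I)%nat -> convex_C1_on I ns U (f i) (gf i).
Hypothesis Hg : forall i, (i < I)%nat -> convex_C1_on I ns U (g i) (gg i).
Hypothesis HXsub : forall i, (i < I)%nat -> bsubset ns i (X i).
Hypothesis HXi_convex : vconvex_set I ns (inXi I ns X nc h).
Hypothesis HL : forall i, (i < I)%nat -> 0 <= L i /\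
  forall x y, inX I ns X x -> inX I ns X y ->
    vnorm I ns (vsub (gf i x) (gf i y)) <= L i * vnorm I ns (vsub x y).
Hypothesis Htau : forall i, (i < I)%nat -> 2 * sumR I L < tau i.
Hypothesis Hx0 : inXi I ns X nc h x0.
Hypothesis Hxs0 : xs O = x0.
Hypothesis Hxs : forall nu, inXi I ns X nc h (xs (S nu)) /\
  forall z, inXi I ns X nc h z ->
    tilde_theta I ns f g gf gg tau (xs (S nu)) (xs nu) <= tilde_theta I ns f g gf gg tau z (xs nu).
Hypothesis Hcompact :
  vcompact_set I ns (fun x => inXi I ns X nc h x /\ theta I f g x <= theta I f g x0).

Definition residual_weight : R := sumR I (fun i => L i + tau i / 2).

Lemma residual_weight_nonneg : 0 <= residual_weight.
Proof.
  apply sumR_nonneg. intros i Hi. destruct (HL i Hi) as [HLi _].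
  pose proof (Htau i Hi). assert (0 <= sumR I L) by (apply sumR_nonneg; intros; apply HL; auto).
  lra.
Qed.

Lemma f_tangent_lower i a b : (i < I)%nat -> inX I ns X a -> inX I ns X b ->
  f i a + inner I ns (gf i a) (vsub b a) <= f i b.
Proof.
  intros Hi Ha Hb. destruct (Hf i Hi) as [Hc [Hd _]].
  apply (gradient_inequality I ns U); auto; [apply Ha | apply Hb].
Qed.

Lemma g_tangent_lower i a b : (i < I)%nat -> inX I ns X a -> inX I ns X b ->
  g i a + inner I ns (gg i a) (vsub b a) <= g i b.
Proof.
  intros Hi Ha Hb. destruct (Hg i Hi) as [Hc [Hd _]].
  apply (gradient_inequality I ns U); auto; [apply Ha | apply Hb].
Qed.

Lemma f_tangent_upper i a b : (i < I)%nat -> inX I ns X a -> inX I ns X b ->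
  f i b <= f i a + inner I ns (gf i a) (vsub b a) + L i * inner I ns (vsub b a) (vsub b a).
Proof.
  intros Hi Ha Hb. destruct (Hf i Hi) as [Hc [Hd _]]. destruct (HL i Hi) as [HLi Hlip].
  apply (descent_inequality I ns U); auto; [apply Ha | apply Hb].
Qed.

Lemma iterates_feasible nu : inXi I ns X nc h (xs nu).
Proof. destruct nu; [rewrite Hxs0; exact Hx0 | apply Hxs]. Qed.

(** Since [tau_min > 2 sum L], each step decreases [theta] by [c |step|^2]. *)
Lemma iterates_decrease : exists c, 0 < c /\ forall nu,
  theta I f g (xs (S nu)) + c * inner I ns (vsub (xs (S nu)) (xs nu)) (vsub (xs (S nu)) (xs nu))
  <= theta I f g (xs nu).
Proof.
  destruct (common_radius I (fun i d => d <= tau i / 2 - sumR I L)) as [c [Hc0 Hc]].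
  - intros i Hi. exists (tau i / 2 - sumR I L). split; [specialize (Htau i Hi); lra | lra].
  - intros; lra.
  - exists c. split; auto. intros nu.
    apply (sufficient_decrease I ns X f g gf gg L tau); auto;
      try apply iterates_feasible; auto using f_tangent_upper, g_tangent_lower, f_tangent_lower.
    apply Hxs. apply iterates_feasible.
Qed.

Lemma theta_nonincreasing nu m : (nu <= m)%nat -> theta I f g (xs m) <= theta I f g (xs nu).
Proof.
  destruct iterates_decrease as [c [Hc Hdec]].
  induction 1; [lra|].
  pose proof (Hdec m). pose proof (inner_nonneg I ns (vsub (xs (S m)) (xs m))). nra.
Qed.

Lemma iterates_in_sublevel nu :
  inXi I ns X nc h (xs nu) /\ theta I f g (xs nu) <= theta I f g x0.
Proof.
  split; [apply iterates_feasible|]. rewrite <- Hxs0. apply theta_nonincreasing. lia.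
Qed.

Lemma iterate_residual nu z : inXi I ns X nc h z ->
  0 <= inner I ns (grad_theta I gf gg (xs nu)) (vsub z (xs (S nu)))
       + residual_weight * inner I ns (vsub z (xs nu)) (vsub z (xs nu)).
Proof.
  intros Hz.
  apply (surrogate_minimizer_residual I ns X f g gf gg L tau);
    auto using f_tangent_upper, f_tangent_lower; try apply iterates_feasible; try apply Hz.
  - intros i Hi. apply HL; auto.
  - intros i Hi. pose proof (Htau i Hi). assert (0 <= sumR I L) by (apply sumR_nonneg; intros; apply HL; auto). lra.
  - apply Hxs; auto.
Qed.

Lemma limit_point_feasible xb : limit_point I ns xs xb -> inXi I ns X nc h xb.
Proof.
  intros Hlp. apply (compact_contains_limit_points I ns _ xs xb Hcompact iterates_in_sublevel Hlp).
Qed.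

Lemma theta_limit_lower xb N :
  limit_point I ns xs xb -> theta I f g xb <= theta I f g (xs N).
Proof.
  intros Hlp.
  assert (Uxb : U xb) by (apply HXU, limit_point_feasible; exact Hlp).
  destruct (theta_local_bound I ns U f g gf gg xb) as [M [d [HM [Hd Hnear]]]]; auto;
    try (intros i Hi; apply Hf || apply Hg; auto).
  destruct (Rle_dec (theta I f g xb) (theta I f g (xs N))) as [|Hgt]; auto. exfalso.
  set (gap := theta I f g xb - theta I f g (xs N)).
  assert (Hgap : 0 < gap) by (unfold gap; lra).
  assert (Hr : 0 < Rmin d (gap / (M + 1))) by (apply Rmin_pos; auto; apply Rdiv_lt_0_compat; lra).
  destruct (proj2 Hlp _ Hr N) as [m [Hm Hclose]].
  assert (Hclose_d : vnorm I ns (vsub (xs m) xb) < d)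
    by (eapply Rlt_le_trans; [exact Hclose | apply Rmin_l]).
  assert (Hclose_gap : vnorm I ns (vsub (xs m) xb) < gap / (M + 1))
    by (eapply Rlt_le_trans; [exact Hclose | apply Rmin_r]).
  pose proof (Rabs_le_inv _ _ (Hnear (xs m) (proj1 (proj1 (iterates_feasible m))) Hclose_d)).
  pose proof (theta_nonincreasing N m Hm).
  assert (M * vnorm I ns (vsub (xs m) xb) < gap).
  { apply Rle_lt_trans with (M * (gap / (M + 1))); [apply Rmult_le_compat_l; lra|].
    replace (M * (gap / (M + 1))) with (gap - gap / (M + 1)) by (field; lra).
    assert (0 < gap / (M + 1)) by (apply Rdiv_lt_0_compat; lra). lra. }
  unfold gap in *. lra.
Qed.

Lemma steps_vanish_near_limit xb :
  limit_point I ns xs xb -> forall eta, 0 < eta -> exists rho, 0 < rho /\ forall nu,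
    vnorm I ns (vsub (xs nu) xb) < rho -> vnorm I ns (vsub (xs (S nu)) (xs nu)) <= eta.
Proof.
  intros Hlp eta Heta.
  assert (Uxb : U xb) by (apply HXU, limit_point_feasible; exact Hlp).
  destruct (theta_local_bound I ns U f g gf gg xb) as [M [d [HM [Hd Hnear]]]]; auto;
    try (intros i Hi; apply Hf || apply Hg; auto).
  destruct iterates_decrease as [c [Hc Hdec]].
  set (bound := c * (eta * eta) / (M + 1)).
  assert (Hbound : 0 < bound) by (apply Rdiv_lt_0_compat; [apply Rmult_lt_0_compat; nra | lra]).
  exists (Rmin d bound). split; [apply Rmin_pos; auto|]. intros nu Hclose.
  assert (Hclose_d : vnorm I ns (vsub (xs nu) xb) < d)
    by (eapply Rlt_le_trans; [exact Hclose | apply Rmin_l]).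
  assert (Hclose_b : vnorm I ns (vsub (xs nu) xb) < bound)
    by (eapply Rlt_le_trans; [exact Hclose | apply Rmin_r]).
  pose proof (Rabs_le_inv _ _ (Hnear (xs nu) (proj1 (proj1 (iterates_feasible nu))) Hclose_d)).
  pose proof (theta_limit_lower xb (S nu) Hlp). pose proof (Hdec nu).
  assert (M * vnorm I ns (vsub (xs nu) xb) <= c * (eta * eta)).
  { apply Rle_trans with (M * bound); [apply Rmult_le_compat_l; lra|].
    unfold bound. replace (M * (c * (eta * eta) / (M + 1))) with (c * (eta * eta) - bound)
      by (unfold bound; field; lra). lra. }
  apply vnorm_le_of_sq; [lra|].
  apply Rmult_le_reg_l with c; [exact Hc | lra].
Qed.

(** The residual inequality passes to every limit point: apply it at an
    iterate [x^nu] close to [xb] (where the step and the gradient variation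
    are small as well) and control the error by [residual_perturbation]. *)
Lemma limit_point_residual xb :
  limit_point I ns xs xb -> forall w, inXi I ns X nc h w ->
  0 <= inner I ns (grad_theta I gf gg xb) (vsub w xb)
       + residual_weight * inner I ns (vsub w xb) (vsub w xb).
Proof.
  intros Hlp w Hw.
  assert (Uxb : U xb) by (apply HXU, limit_point_feasible; exact Hlp).
  pose proof residual_weight_nonneg as HC.
  pose proof (vnorm_nonneg I ns (grad_theta I gf gg xb)). pose proof (vnorm_nonneg I ns (vsub w xb)).
  apply (nonneg_of_small_errors _ (vnorm I ns (grad_theta I gf gg xb) + vnorm I ns (vsub w xb) + 1
                                   + residual_weight * (2 * vnorm I ns (vsub w xb) + 1)));
    [nra|]. intros eta Heta Heta1.
  destruct (grad_theta_continuous I ns U gf gg xb) with (eps := eta) as [dg [Hdg Hgrad]]; auto;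
    try (intros i Hi; apply Hf || apply Hg; auto).
  destruct (steps_vanish_near_limit xb Hlp (eta / 2)) as [rho [Hrho Hstep]]; [lra|].
  set (r := Rmin (eta / 2) (Rmin dg rho)).
  assert (Hr : 0 < r) by (repeat apply Rmin_pos; lra).
  destruct (proj2 Hlp r Hr O) as [nu [_ Hclose]].
  assert (Hr_le : r <= eta / 2 /\ r <= dg /\ r <= rho).
  { unfold r. split; [apply Rmin_l|].
    split; (eapply Rle_trans; [apply Rmin_r|]); [apply Rmin_l | apply Rmin_r]. }
  pose proof (Hstep nu ltac:(lra)) as Hsmall.
  pose proof (vnorm_triangle I ns (xs (S nu)) (xs nu) xb).
  apply (residual_perturbation I ns _ (grad_theta I gf gg (xs nu)) xb (xs nu) (xs (S nu)));
    auto; try lra.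
  - apply Hgrad; [apply HXU, iterates_feasible | lra].
  - apply iterate_residual, Hw.
Qed.

Lemma limit_point_stationary xb :
  limit_point I ns xs xb -> stationary I ns X nc h gf gg xb.
Proof.
  intros Hlp. split; [apply limit_point_feasible; exact Hlp|].
  apply (stationary_of_residual I ns _ _ xb residual_weight HXi_convex);
    auto using limit_point_feasible, residual_weight_nonneg, limit_point_residual.
Qed.

End Algorithm.

Theorem theorem2
  (I : nat) (ns : nat -> nat) (nc : nat)
  (X : nat -> BVec -> Prop)
  (f g : nat -> Vec -> R) (h : nat -> Vec -> R)
  (gf gg gh : nat -> Vec -> Vec)
  (L tau : nat -> R) (x0 : Vec) (xs : nat -> Vec)
  (HI : (1 <= I)%nat)
  (Hns : forall i, (i < I)%nat -> (1 <= ns i)%nat)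
  (* (A1) *)
  (HA1 : exists U : Vec -> Prop,
      vopen_set I ns U /\ vconvex_set I ns U /\ (forall x, inX I ns X x -> U x) /\
      (forall i, (i < I)%nat -> convex_C1_on I ns U (f i) (gf i)) /\
      (forall i, (i < I)%nat -> convex_C1_on I ns U (g i) (gg i)) /\
      (forall j, (j < nc)%nat -> convex_C1_on I ns U (h j) (gh j)))
  (* (A2) *)
  (HA2 : forall i, (i < I)%nat ->
      bsubset ns i (X i) /\ bnonempty (X i) /\ bclosed ns i (X i) /\ bconvex (X i))
  (* (A4), at the starting point x0 *)
  (Hx0 : inXi I ns X nc h x0)
  (HA4 : vcompact_set I ns (fun x => inXi I ns X nc h x /\ theta I f g x <= theta I f g x0))
  (* Lipschitz gradients of the f_i on X *)
  (HL : forall i, (i < I)%nat -> 0 <= L i /\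
      forall x y, inX I ns X x -> inX I ns X y ->
        vnorm I ns (vsub (gf i x) (gf i y)) <= L i * vnorm I ns (vsub x y))
  (* tau > 0 and tau^min > 2 sum_i L_i *)
  (Htau_pos : forall i, (i < I)%nat -> 0 < tau i)
  (Htau : forall i, (i < I)%nat -> 2 * sumR I L < tau i)
  (* Algorithm 1 with gamma^nu = 1: x^{nu+1} = xhat(x^nu) *)
  (Hxs0 : xs O = x0)
  (Hxs : forall nu, inXi I ns X nc h (xs (S nu)) /\
      forall z, inXi I ns X nc h z ->
        tilde_theta I ns f g gf gg tau (xs (S nu)) (xs nu)
        <= tilde_theta I ns f g gf gg tau z (xs nu)) :
  (exists nu, stationary I ns X nc h gf gg (xs nu)) \/
  ((exists xbar, limit_point I ns xs xbar) /\
   (forall xbar, limit_point I ns xs xbar -> stationary I ns X nc h gf gg xbar)).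
Proof.
  destruct HA1 as [U [_ [_ [HXU [Hf [Hg Hh]]]]]].
  assert (HXsub : forall i, (i < I)%nat -> bsubset ns i (X i)) by (intros; apply HA2; auto).
  assert (HXi_convex : vconvex_set I ns (inXi I ns X nc h)).
  { apply (inXi_convex I ns X nc h U); auto.
    - intros i Hi. apply HA2; auto.
    - intros j Hj. apply Hh; auto. }
  right. split.
  - apply (compact_limit_point_exists I ns _ xs HA4).
    intros m; eapply iterates_in_sublevel; eauto.
  - intros xb. apply (limit_point_stationary I ns nc X f g h gf gg L tau U x0 xs); auto.
Qed.
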